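(* Let $f$ be as in the standing setting and suppose $f$ is quasi-strongly convex on $X$ with constant $\kappa_f>0$, i.e. $$f^*\ \ge\ f(x)+\langle \nabla f(x),\bar x-x\rangle+\tfrac{\kappa_f}{2}\|x-\bar x\|^2\qquad\forall x\in X .$$ Then $f$ has a quadratic under-approximation on $X$ with the same constant, i.e. $$f(x)\ \ge\ f^*+\langle \nabla f(\bar x),x-\bar x\rangle+\tfrac{\kappa_f}{2}\|x-\bar x\|^2\qquad\forall x\in X .$$
   Context: Standing setting: $X\subseteq\mathbb{R}^n$ is a nonempty closed convex set; $f:X\to\mathbb{R}$ is convex and continuously differentiable, with $L_f$-Lipschitz continuous gradient on $X$ ($\|\nabla f(x)-\nabla f(y)\|\le L_f\|x-y\|$ for all $x,y\in X$, $L_f>0$). Consider the problem $f^*=\min_{x\in X}f(x)$, whose optimal set $X^*=\arg\min_{x\in X}f(x)$ is assumed nonempty and closed and $f^*$ finite. $\|\cdot\|$ is the Euclidean norm, $[u]_S$ denotes the Euclidean projection of $u$ onto a closed convex set $S$, and for $x\in X$ we write $\bar x=[x]_{X^*}$. *)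

From mathcomp Require Import ssreflect ssrfun ssrbool eqtype ssrnat fintype bigop.
From Stdlib Require Import Reals.
Open Scope R_scope.

Definition vec (n : nat) := 'I_n -> R.

Definition vadd {n} (x y : vec n) : vec n := fun i => x i + y i.
Definition vsub {n} (x y : vec n) : vec n := fun i => x i - y i.
Definition vscal {n} (a : R) (x : vec n) : vec n := fun i => a * x i.

Definition inner {n} (x y : vec n) : R := \big[Rplus/0]_(i < n) (x i * y i).
Definition norm {n} (x : vec n) : R := sqrt (inner x x).

Definition convex_vset {n} (S : vec n -> Prop) : Prop :=
  forall x y t, S x -> S y -> 0 <= t <= 1 ->
    S (vadd (vscal t x) (vscal (1 - t) y)).

Definition closed_vset {n} (S : vec n -> Prop) : Prop :=
  forall x, (forall eps, 0 < eps -> exists y, S y /\ norm (vsub y x) < eps) -> S x.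

Definition nonempty_set {n} (S : vec n -> Prop) : Prop := exists x, S x.

Definition convex_on {n} (S : vec n -> Prop) (f : vec n -> R) : Prop :=
  forall x y t, S x -> S y -> 0 <= t <= 1 ->
    f (vadd (vscal t x) (vscal (1 - t) y)) <= t * f x + (1 - t) * f y.

Definition has_gradient_at {n} (f : vec n -> R) (x gx : vec n) : Prop :=
  forall eps, 0 < eps -> exists delta, 0 < delta /\
    forall y, norm (vsub y x) < delta ->
      Rabs (f y - f x - inner gx (vsub y x)) <= eps * norm (vsub y x).

Definition Lsmooth_on {n} (S : vec n -> Prop) (f : vec n -> R) (g : vec n -> vec n)
  (L : R) : Prop :=
  (forall x, S x -> has_gradient_at f x (g x)) /\
  (forall x y, S x -> S y -> norm (vsub (g x) (g y)) <= L * norm (vsub x y)).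

Definition argmin_set {n} (X : vec n -> Prop) (f : vec n -> R) : vec n -> Prop :=
  fun x => X x /\ forall y, X y -> f x <= f y.

Definition is_proj {n} (S : vec n -> Prop) (x p : vec n) : Prop :=
  S p /\ forall q, S q -> norm (vsub x p) <= norm (vsub x q).

(* Restrict f to the segment from the projection [xb] to [x], i.e. set
   [phi s = f (xb + s (x - xb))].  Every point of the segment still projects
   onto [xb], so quasi-strong convexity at that point reads
   [s phi'(s) - (phi s - phi 0) >= c s^2] with [c = kappa/2 |x - xb|^2]; in
   other words the secant slope [(phi s - phi 0) / s] increases at rate at
   least [c], while it tends to [phi'(0) = <g xb, x - xb>] as [s -> 0].
   Hence [phi 1 - phi 0 >= phi'(0) + c], which is the claim.  Derivatives are
   replaced by the supporting lines of the convex function [phi], and the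
   integration by a telescoping sum over the geometric partition [q^k]. *)
From HB Require Import structures.
From mathcomp Require Import ssreflect ssrfun ssrbool eqtype ssrnat fintype bigop.
From Stdlib Require Import Reals Lra Psatz FunctionalExtensionality.
Open Scope R_scope.

HB.instance Definition _ := Monoid.isComLaw.Build R 0 Rplus
  (fun a b c => esym (Rplus_assoc a b c)) Rplus_comm Rplus_0_l.

Lemma discriminant_le A B C :
  0 <= C -> (forall l, 0 <= A + 2 * l * B + l ^ 2 * C) -> B ^ 2 <= A * C.
Proof.
move=> C_ge0 quad_ge0; have A_ge0 : 0 <= A by have := quad_ge0 0; lra.
have [C0 | C_gt0] : C = 0 \/ 0 < C by lra.
- have [B0 | B_neq0] := Req_dec B 0; first by rewrite B0 C0; lra.
  have := quad_ge0 (- (A + 1) / (2 * B)); rewrite C0.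
  have -> : A + 2 * (- (A + 1) / (2 * B)) * B = -1 by field.
  lra.
- have := quad_ge0 (- B / C).
  have -> : A + 2 * (- B / C) * B + (- B / C) ^ 2 * C = (A * C - B ^ 2) / C
    by field; lra.
  move=> h; have : 0 <= (A * C - B ^ 2) / C * C by nra.
  rewrite /Rdiv Rmult_assoc Rinv_l; lra.
Qed.

Lemma le_of_geometric_bounds c b :
  0 <= c -> (forall q M, 0 < q < 1 -> c * q * (1 - q ^ M) <= b) -> c <= b.
Proof.
move=> c_ge0 bounds; have b_ge0 : 0 <= b by have := bounds (1 / 2) 0%nat; simpl; lra.
have cq_le : forall q, 0 < q < 1 -> c * q <= b.
{ move=> q q01; apply: Rnot_lt_le => bcq.
  have cq_gt0 : 0 < c * q by lra.
  have q_lt1 : Rabs q < 1 by rewrite Rabs_right; lra.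
  have gap_gt0 : 0 < (c * q - b) / (c * q) by apply: Rdiv_lt_0_compat; lra.
  have [N HN] := pow_lt_1_zero q q_lt1 _ gap_gt0.
  have := HN N (le_n N); rewrite Rabs_right; last by apply/Rle_ge/pow_le; lra.
  move=> qN; have := bounds q N q01.
  have : c * q * q ^ N < c * q * ((c * q - b) / (c * q)) by nra.
  have -> : c * q * ((c * q - b) / (c * q)) = c * q - b by field; nra.
  lra. }
apply: Rnot_lt_le => bc.
have c_gt0 : 0 < c by lra.
have q01 : 0 < (b + c) / (2 * c) < 1.
{ split; first by apply: Rdiv_lt_0_compat; lra.
  have -> : (b + c) / (2 * c) = 1 - (c - b) / (2 * c) by field; lra.
  suff : 0 < (c - b) / (2 * c) by lra.
  by apply: Rdiv_lt_0_compat; lra. }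
have := cq_le _ q01.
have -> : c * ((b + c) / (2 * c)) = (b + c) / 2 by field; lra.
lra.
Qed.

Section InnerProduct.
Context {n : nat}.
Implicit Types (u v w : vec n) (a : R).

Lemma inner_sym u v : inner u v = inner v u.
Proof. by apply: eq_bigr => i _; rewrite Rmult_comm. Qed.

Lemma inner_addr u v w : inner u (vadd v w) = inner u v + inner u w.
Proof. by rewrite /inner -big_split; apply: eq_bigr => i _; rewrite /vadd /=; ring. Qed.

Lemma inner_scalr a u v : inner u (vscal a v) = a * inner u v.
Proof.
rewrite /inner (big_endo (Rmult a) (Rmult_plus_distr_l a) (Rmult_0_r a)).
by apply: eq_bigr => i _; rewrite /vscal; ring.
Qed.

Lemma inner_scall a u v : inner (vscal a u) v = a * inner u v.
Proof. by rewrite inner_sym inner_scalr inner_sym. Qed.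

Lemma inner_ge0 u : 0 <= inner u u.
Proof. by apply: (big_ind (Rle 0)) => [|x y|i _]; [lra | lra | apply: Rle_0_sqr]. Qed.

Lemma norm_ge0 u : 0 <= norm u.
Proof. exact: sqrt_pos. Qed.

Lemma norm_sq u : norm u ^ 2 = inner u u.
Proof. exact/pow2_sqrt/inner_ge0. Qed.

Lemma norm_scal a u : 0 <= a -> norm (vscal a u) = a * norm u.
Proof.
move=> a_ge0; rewrite /norm inner_scalr inner_scall -Rmult_assoc.
by rewrite sqrt_mult_alt ?sqrt_square //; apply: Rmult_le_pos.
Qed.

Lemma cauchy_schwarz u v : inner u v <= norm u * norm v.
Proof.
apply: Rsqr_incr_0_var; last exact: Rmult_le_pos (norm_ge0 u) (norm_ge0 v).
rewrite !Rsqr_pow2 Rpow_mult_distr !norm_sq.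
apply: discriminant_le => [|l]; first exact: inner_ge0.
have := inner_ge0 (vadd u (vscal l v)).
rewrite !inner_addr !(inner_sym (vadd _ _)) !inner_addr !inner_scalr !inner_scall.
by rewrite (inner_sym v u); lra.
Qed.

Lemma norm_triangle u v : norm (vadd u v) <= norm u + norm v.
Proof.
apply: Rsqr_incr_0_var; last by have := norm_ge0 u; have := norm_ge0 v; lra.
rewrite !Rsqr_pow2 norm_sq inner_addr !(inner_sym (vadd _ _)) !inner_addr.
by have := cauchy_schwarz u v; rewrite (inner_sym v u) -!norm_sq; lra.
Qed.

End InnerProduct.

Definition segment {n} (x y : vec n) (s : R) : vec n :=
  vadd (vscal s x) (vscal (1 - s) y).

Section Segment.
Context {n : nat} {x y : vec n}.

Ltac vec_ext :=
  apply: functional_extensionality => i; rewrite /segment /vsub /vadd /vscal; ring.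

Lemma segment0 : segment x y 0 = y.
Proof. by vec_ext. Qed.

Lemma segment1 : segment x y 1 = x.
Proof. by vec_ext. Qed.

Lemma segment_sub s t :
  vsub (segment x y t) (segment x y s) = vscal (t - s) (vsub x y).
Proof. by vec_ext. Qed.

Lemma segment_subr s : vsub (segment x y s) y = vscal s (vsub x y).
Proof. by vec_ext. Qed.

Lemma segment_subl s : vsub y (segment x y s) = vscal (- s) (vsub x y).
Proof. by vec_ext. Qed.

Lemma is_proj_segment {S : vec n -> Prop} s :
  is_proj S x y -> 0 <= s <= 1 -> is_proj S (segment x y s) y.
Proof.
move=> [Sy y_min] s01; split=> // q Sq.
have split_xq : vsub x q = vadd (vscal (1 - s) (vsub x y)) (vsub (segment x y s) q)
  by vec_ext.
have := norm_triangle (vscal (1 - s) (vsub x y)) (vsub (segment x y s) q).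
rewrite -split_xq segment_subr !norm_scal; try lra.
by have := y_min q Sq; lra.
Qed.

End Segment.

Lemma convex_gradient_le {n} {X : vec n -> Prop} {f : vec n -> R} {x y gx : vec n} :
  convex_on X f -> X x -> X y -> has_gradient_at f x gx ->
  f x + inner gx (vsub y x) <= f y.
Proof.
move=> f_cvx Xx Xy f_diff; set e := norm (vsub y x).
have e_ge0 : 0 <= e by exact: norm_ge0.
suff approx : forall eps, 0 < eps -> f x + inner gx (vsub y x) <= f y + eps * e.
{ apply: Rle_plus_epsilon => eps eps_gt0.
  have e1_gt0 : 0 < e + 1 by lra.
  have := approx (eps / (e + 1)) (Rdiv_lt_0_compat _ _ eps_gt0 e1_gt0).
  have -> : eps / (e + 1) * e = eps - eps / (e + 1) by field; lra.
  by have := Rdiv_lt_0_compat _ _ eps_gt0 e1_gt0; lra. }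
move=> eps eps_gt0; have [delta [delta_gt0 near_x]] := f_diff eps eps_gt0.
set t := Rmin 1 (delta / (e + 1)).
have t_gt0 : 0 < t by apply: Rmin_pos; [lra | apply: Rdiv_lt_0_compat; lra].
have t_le1 : t <= 1 by exact: Rmin_l.
have te_lt : t * e < delta.
{ have t_le : t <= delta / (e + 1) by exact: Rmin_r.
  have delta_eq : delta / (e + 1) * (e + 1) = delta by field; lra.
  nra. }
have tangent := near_x (segment y x t).
rewrite segment_subr norm_scal ?inner_scalr -/e in tangent; last lra.
have := f_cvx y x t Xy Xx (conj (Rlt_le _ _ t_gt0) t_le1).
have := Rle_abs (- (f (segment y x t) - f x - t * inner gx (vsub y x))).
rewrite Rabs_Ropp; have := tangent te_lt; rewrite /segment.
nra.
Qed.

Section SecantSlope.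
Variables (phi slope : R -> R) (c : R).
Hypothesis c_ge0 : 0 <= c.
Hypothesis supporting_line : forall s t, 0 <= s <= 1 -> 0 <= t <= 1 ->
  phi s + (t - s) * slope s <= phi t.
Hypothesis slope_gap : forall s, 0 <= s <= 1 ->
  phi s - s * slope s + c * s ^ 2 <= phi 0.

Let excess s := (phi s - phi 0) / s - slope 0.

Lemma excess_ge0 s : 0 < s <= 1 -> 0 <= excess s.
Proof.
move=> s01; have := supporting_line 0 s ltac:(lra) ltac:(lra).
rewrite /excess; have -> : (phi s - phi 0) / s - slope 0 = (phi s - phi 0 - s * slope 0) / s
  by field; lra.
by move=> h; apply: Rle_mult_inv_pos; lra.
Qed.

Lemma excess_step s t : 0 < s < t -> t <= 1 ->
  excess s + c * s * (t - s) / t <= excess t.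
Proof.
move=> st t_le1.
have slope_s := slope_gap s ltac:(lra).
have line_st := supporting_line s t ltac:(lra) ltac:(lra).
have cross : t * (phi s - phi 0) + c * s ^ 2 * (t - s) <= s * (phi t - phi 0) by nra.
rewrite /excess.
have -> : (phi t - phi 0) / t = s * (phi t - phi 0) / (s * t) by field; lra.
have -> : (phi s - phi 0) / s - slope 0 + c * s * (t - s) / t
  = (t * (phi s - phi 0) + c * s ^ 2 * (t - s)) / (s * t) - slope 0 by field; lra.
suff : 0 < / (s * t) by rewrite /Rdiv; nra.
by apply: Rinv_0_lt_compat; nra.
Qed.

Lemma excess_geometric q M : 0 < q < 1 ->
  excess (q ^ M) + c * q * (1 - q ^ M) <= excess 1.
Proof.
move=> q01; elim: M => [|M IH] /=; first lra.
have qM_gt0 : 0 < q ^ M by apply: pow_lt; lra.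
have qM_le1 : q ^ M <= 1 by rewrite -(pow1 M); apply: pow_incr; lra.
have := excess_step (q * q ^ M) (q ^ M) ltac:(nra) qM_le1.
have -> : c * (q * q ^ M) * (q ^ M - q * q ^ M) / q ^ M = c * q * q ^ M * (1 - q)
  by field; lra.
nra.
Qed.

Lemma secant_growth : phi 0 + slope 0 + c <= phi 1.
Proof.
suff : c <= excess 1 by rewrite /excess Rdiv_1_r; lra.
apply: le_of_geometric_bounds => // q M q01.
have qM_gt0 : 0 < q ^ M by apply: pow_lt; lra.
have qM_le1 : q ^ M <= 1 by rewrite -(pow1 M); apply: pow_incr; lra.
have := excess_ge0 (q ^ M) (conj qM_gt0 qM_le1).
have := excess_geometric q M q01; lra.
Qed.

End SecantSlope.

Theorem theorem1 (n : nat) (X : vec n -> Prop) (f : vec n -> R)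
  (g : vec n -> vec n) (Lf kappa fstar : R) :
  nonempty_set X -> closed_vset X -> convex_vset X ->
  convex_on X f -> 0 < Lf -> Lsmooth_on X f g Lf ->
  nonempty_set (argmin_set X f) -> closed_vset (argmin_set X f) ->
  (forall x, X x -> fstar <= f x) -> (exists x, X x /\ f x = fstar) ->
  0 < kappa ->
  (forall x xb, X x -> is_proj (argmin_set X f) x xb ->
     fstar >= f x + inner (g x) (vsub xb x) + kappa / 2 * (norm (vsub x xb)) ^ 2) ->
  forall x xb, X x -> is_proj (argmin_set X f) x xb ->
    f x >= fstar + inner (g xb) (vsub x xb) + kappa / 2 * (norm (vsub x xb)) ^ 2.
Proof.
move=> _ _ X_cvx f_cvx _ [f_grad _] _ _ f_lb [x0 [Xx0 fx0]] kappa_gt0 qsc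
  x xb Xx xb_proj.
have [[Xxb xb_min] _] := xb_proj.
have fxb : f xb = fstar by have := f_lb xb Xxb; have := xb_min x0 Xx0; lra.
have Xseg s : 0 <= s <= 1 -> X (segment x xb s) by move=> s01; exact: X_cvx.
set d := norm (vsub x xb); set c := kappa / 2 * d ^ 2.
have := secant_growth (fun s => f (segment x xb s))
  (fun s => inner (g (segment x xb s)) (vsub x xb)) c.
cbv beta; rewrite segment0 segment1 fxb => growth; apply/Rle_ge/growth.
- by apply: Rmult_le_pos; [lra | apply: pow2_ge_0].
- move=> s t s01 t01.
  have := convex_gradient_le f_cvx (Xseg s s01) (Xseg t t01) (f_grad _ (Xseg s s01)).
  by rewrite segment_sub inner_scalr.
- move=> s s01; have := qsc _ xb (Xseg s s01) (is_proj_segment s xb_proj s01).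
  rewrite segment_subl segment_subr inner_scalr norm_scal -/d; last lra.
  by rewrite /c; lra.
Qed.
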